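(* Let $(F_n)_{n\geq0}$ be the Fibonacci sequence and $\Phi=\frac{1+\sqrt5}{2}$ the golden ratio. Then for every positive integer $n$, \[\Phi^{\frac{n^2}{4}-\frac{9}{4}}\leq \mathrm{lcm}(F_1,F_2,\dots,F_n)\leq \Phi^{\frac{n^2}{3}+\frac{4n}{3}}.\]
   Context: The Fibonacci sequence is defined by $F_0=0$, $F_1=1$, $F_{n+2}=F_{n+1}+F_n$ for $n\geq0$. $\mathrm{lcm}$ denotes the least common positive multiple. *)

From Stdlib Require Import Reals Arith List.
Open Scope R_scope.

Fixpoint fib (n : nat) : nat :=
  match n with
  | O => O
  | S m => match m with
           | O => 1%nat
           | S k => (fib m + fib k)%nat
           end
  end.

Fixpoint lcm_fib (n : nat) : nat :=
  match n with
  | O => 1%nat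
  | S m => Nat.lcm (lcm_fib m) (fib (S m))
  end.

Definition phi : R := (1 + sqrt 5) / 2.
Example fib_test : List.map fib (List.seq 0 8) = (0::1::1::2::3::5::8::13::nil)%nat.
Proof. reflexivity. Qed.
Example lcm_test : lcm_fib 6 = 120%nat.
Proof. reflexivity. Qed.

(* Everything rests on strong divisibility, gcd(F_a, F_b) = F_gcd(a,b), and on the
   recursion L_(n+1) * gcd(L_n, F_(n+1)) = L_n * F_(n+1).

   Upper bound: gcd(L_n, F_(n+1)) is at least F_d for a proper divisor d of n+1, and
   at least lcm(F_3m, F_2m) = F_3m F_2m / F_m when n+1 = 6m.  Combined with
   phi^(k-2) <= F_k <= phi^(k-1) and followed through the residues of n modulo 6,
   this gives L_n <= phi^e(n) with an explicit quadratic e(n) <= (n^2 + 4n)/3.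

   Lower bound: for k < n+1, gcd(F_k, F_(n+1)) = F_g with g a proper divisor of n+1,
   so it divides F_((n+1)/p) for a prime p | n+1.  Hence gcd(L_n, F_(n+1)) divides the
   product of F_((n+1)/d) over the divisors d of n+1 in the "wheel"
   W = {2, 3} u {d > 4 : gcd(d, 6) = 1}, which contains all primes.  Taking
   logarithms, log_phi L_n >= E(n), where summing the losses gives
   E(n) = n(n+1)/2 - 2n - sum_(d in W) C(floor(n/d), 2), and the estimate
   sum_(d in W) 1/d^2 <= 1/4 + 1/9 + 1/25 + 1/49 + 1/27 yields E(n) >= (n^2 - 9)/4
   for n >= 51.  For 3 <= n <= 50 the bound follows from F_(n^2-7) <= L_n^4, which
   is checked by computation in binary arithmetic. *)

From Stdlib Require Import Reals Lra Lia Psatz NArith Arith.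
From mathcomp Require Import all_boot zify.

Set Implicit Arguments.
Unset Strict Implicit.

Open Scope nat_scope.

(** * Arithmetic of the Fibonacci numbers *)

Lemma fibSS k : fib k.+2 = fib k.+1 + fib k.
Proof. by []. Qed.

Lemma fib_add m n : fib (m + n).+1 = fib m.+1 * fib n.+1 + fib m * fib n.
Proof.
elim: n m => [|n IH] m; first by rewrite addn0 muln1 muln0 addn0.
rewrite -addSnnS IH !fibSS mulnDl mulnDr; lia.
Qed.

Lemma fib_gt0 n : 0 < n -> 0 < fib n.
Proof.
elim: n => [//|[|n] IH _] //.
by rewrite fibSS addn_gt0 IH.
Qed.

Lemma fib_coprime n : coprime (fib n) (fib n.+1).
Proof.
elim: n => [//|n IH].
by rewrite /coprime fibSS gcdnDl gcdnC.
Qed.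

Lemma fib_gcd_shift m n : gcdn (fib m) (fib (m + n)) = gcdn (fib m) (fib n).
Proof.
case: m => [|m]; first by rewrite gcd0n add0n.
rewrite addSn fib_add mulnC gcdnMDl Gauss_gcdr //.
by rewrite /coprime gcdnC; apply: fib_coprime.
Qed.

Lemma fib_gcd m n : gcdn (fib m) (fib n) = fib (gcdn m n).
Proof.
elim: {m n}(m + n) {-2}m {-2}n (leqnn (m + n)) => [|s IH] m n Hs.
  by move: Hs; rewrite leqn0 addn_eq0 => /andP [/eqP -> /eqP ->].
wlog Hmn : m n Hs / m <= n.
  move=> W; case: (leqP m n) => H; first exact: W.
  rewrite gcdnC [gcdn m n]gcdnC; apply: W; lia.
case: m Hs Hmn => [|m] Hs Hmn; first by rewrite !gcd0n.
rewrite -(subnKC Hmn) fib_gcd_shift gcdnDl IH //; lia.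
Qed.

Lemma fib_dvd d n : d %| n -> fib d %| fib n.
Proof. by move=> /gcdn_idPl dn; apply/gcdn_idPl; rewrite fib_gcd dn. Qed.

(* A distributivity law of the divisibility lattice, proved one prime at a time. *)
Lemma gcd_lcm_dvd a c b : 0 < a -> 0 < c -> 0 < b ->
  gcdn (lcmn a c) b %| lcmn (gcdn a b) (gcdn c b).
Proof.
move=> Ha Hc Hb.
have Hl : 0 < lcmn a c by rewrite lcmn_gt0 Ha Hc.
have ga : 0 < gcdn a b by rewrite gcdn_gt0 Ha.
have gc : 0 < gcdn c b by rewrite gcdn_gt0 Hc.
apply/dvdn_partP => [|p]; first by rewrite gcdn_gt0 Hl.
rewrite mem_primes => /andP [pr _].
apply: dvdn_trans (dvdn_part p _).
rewrite partn_gcd // partn_lcm // partn_lcm // !partn_gcd // !p_part.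
rewrite -!expn_max -!expn_min -!expn_max dvdn_Pexp2l ?prime_gt1 //.
lia.
Qed.

Lemma divide_dvdn x y : Nat.divide x y <-> x %| y.
Proof.
split=> [[z ->]|H]; first exact: dvdn_mull.
by exists (y %/ x); rewrite [RHS](divnK H).
Qed.

Lemma Natgcd_gcdn a b : Nat.gcd a b = gcdn a b.
Proof.
apply: Nat.gcd_unique; try (apply/divide_dvdn; exact: dvdn_gcdl || exact: dvdn_gcdr).
move=> d /divide_dvdn H1 /divide_dvdn H2; apply/divide_dvdn.
by rewrite dvdn_gcd H1 H2.
Qed.

Lemma Natlcm_lcmn a b : Nat.lcm a b = lcmn a b.
Proof.
rewrite /Nat.lcm Natgcd_gcdn /lcmn.
have [->|Hg] := posnP (gcdn a b); first by rewrite divn0 Nat.div_0_r; lia.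
rewrite -muln_divA ?dvdn_gcdr //; congr (_ * _).
set g := gcdn a b; have E : b = Nat.mul (b %/ g) g by rewrite -[Nat.mul _ _]/(_ * _) divnK ?dvdn_gcdr.
by rewrite {1}E Nat.div_mul //; lia.
Qed.

Lemma lcm_fib_S m : lcm_fib m.+1 = lcmn (lcm_fib m) (fib m.+1).
Proof. by rewrite /= Natlcm_lcmn. Qed.

Lemma lcm_fib_gt0 m : 0 < lcm_fib m.
Proof. by elim: m => [//|m IH]; rewrite lcm_fib_S lcmn_gt0 IH fib_gt0. Qed.

Lemma fib_dvd_lcm k m : 0 < k -> k <= m -> fib k %| lcm_fib m.
Proof.
move=> Hk; elim: m => [|m IH] Hkm; first by lia.
rewrite lcm_fib_S; case: (ltngtP k m.+1) => H; [|lia|].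
- exact: dvdn_trans (IH _) (dvdn_lcml _ _).
- by rewrite H dvdn_lcmr.
Qed.

(* The basic recursion: L_(n+1) * gcd(L_n, F_(n+1)) = L_n * F_(n+1).  Both bounds
   come from estimating the gcd, from below for the upper bound and conversely. *)
Lemma lcm_fib_gcd n :
  lcm_fib n.+1 * gcdn (lcm_fib n) (fib n.+1) = lcm_fib n * fib n.+1.
Proof. by rewrite lcm_fib_S muln_lcm_gcd. Qed.

Lemma lcm_fib_step_dvd n g : g %| gcdn (lcm_fib n) (fib n.+1) ->
  lcm_fib n.+1 * g <= lcm_fib n * fib n.+1.
Proof.
move=> Hg; rewrite -lcm_fib_gcd leq_mul2l dvdn_leq ?orbT //.
by rewrite gcdn_gt0 lcm_fib_gt0.
Qed.

Lemma lcm_fib_step_le n : lcm_fib n.+1 <= lcm_fib n * fib n.+1.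
Proof. by rewrite -[lcm_fib n.+1]muln1 lcm_fib_step_dvd ?dvd1n. Qed.

Lemma lcm_fib_step_divisor n d : 0 < d -> d <= n -> d %| n.+1 ->
  lcm_fib n.+1 * fib d <= lcm_fib n * fib n.+1.
Proof.
move=> d0 dn dd; apply: lcm_fib_step_dvd.
by rewrite dvdn_gcd fib_dvd_lcm // fib_dvd.
Qed.

(* When n+1 = 6m both F_3m and F_2m divide the gcd, and gcd(F_3m, F_2m) = F_m. *)
Lemma lcm_fib_step_six n m : 0 < m -> n.+1 = 6 * m ->
  lcm_fib n.+1 * (fib (3 * m) * fib (2 * m)) <= lcm_fib n * fib n.+1 * fib m.
Proof.
move=> m0 Hn.
have G : gcdn (fib (3 * m)) (fib (2 * m)) = fib m.
  by rewrite fib_gcd -muln_gcdl (_ : gcdn 3 2 = 1) // mul1n.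
have D3 : 3 * m %| n.+1 by rewrite Hn (_ : 6 = 2 * 3) // -mulnA dvdn_mull.
have D2 : 2 * m %| n.+1 by rewrite Hn (_ : 6 = 3 * 2) // -mulnA dvdn_mull.
rewrite -(muln_lcm_gcd (fib (3 * m))) G mulnA leq_mul2r lcm_fib_step_dvd ?orbT //.
rewrite dvdn_gcd !dvdn_lcm !fib_dvd_lcm ?fib_dvd //; lia.
Qed.

(* The "wheel" W = {2, 3} together with the integers > 4 prime to 6.  It contains
   every prime, and its density (sum of 1/d^2) is small. *)
Definition wheel (d : nat) : bool :=
  (d == 2) || (d == 3) || [&& 4 < d, ~~ (2 %| d) & ~~ (3 %| d)].

Lemma wheel_gt1 d : wheel d -> 1 < d.
Proof. by rewrite /wheel => /orP [/orP [] /eqP ->|/and3P [H _ _]] //; lia. Qed.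

Lemma prime_wheel p : prime p -> wheel p.
Proof.
move=> pr; rewrite /wheel.
case: (p =P 2) => [->//|H2]; case: (p =P 3) => [->//|H3] /=.
have N2 : ~~ (2 %| p) by rewrite dvdn_prime2 //; apply/eqP; auto.
have N3 : ~~ (3 %| p) by rewrite dvdn_prime2 //; apply/eqP; auto.
rewrite N2 N3 andbT.
case: (p =P 4) => [E|H4]; first by rewrite E in pr.
have := prime_gt1 pr; lia.
Qed.

Fixpoint wheel_prod (n D : nat) : nat :=
  if D is D'.+1 then
    wheel_prod n D' * (if wheel D' && (D' %| n) then fib (n %/ D') else 1)
  else 1.

Lemma wheel_prod_gt0 n D : 0 < n -> 0 < wheel_prod n D.
Proof.
move=> Hn; elim: D => [//|D IH] /=.
rewrite muln_gt0 IH; case: ifP => // /andP [/wheel_gt1 D1 Dn].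
by rewrite fib_gt0 // divn_gt0 ?(dvdn_leq Hn Dn) // ltnW.
Qed.

Lemma fib_dvd_wheel_prod n D p : wheel p -> p %| n -> p < D ->
  fib (n %/ p) %| wheel_prod n D.
Proof.
move=> Wp pn; elim: D => [//|D IH] HD /=.
case: (ltngtP p D) => H; [| lia |].
- by rewrite dvdn_mulr ?IH.
- by rewrite -H Wp pn dvdn_mull.
Qed.

(* For 0 < k < n, gcd(F_k, F_n) = F_g with g a proper divisor of n; so it divides
   F_(n/p) for the least prime factor p of n/g. *)
Lemma gcd_fib_dvd_wheel_prod k n : 0 < k -> k < n ->
  gcdn (fib k) (fib n) %| wheel_prod n n.+1.
Proof.
move=> Hk Hkn; rewrite fib_gcd.
set g := gcdn k n.
have g0 : 0 < g by rewrite gcdn_gt0 Hk.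
have gk : g <= k by rewrite dvdn_leq ?dvdn_gcdl.
set q := n %/ g.
have Eq : n = q * g by rewrite divnK ?dvdn_gcdr.
have q1 : 1 < q by nia.
set p := pdiv q.
have pr : prime p by rewrite pdiv_prime.
have Eqp : q = q %/ p * p by rewrite divnK ?pdiv_dvd.
have pn : p %| n by rewrite Eq dvdn_mulr ?pdiv_dvd.
have En : n %/ p = q %/ p * g.
  by rewrite {1}Eq {1}Eqp mulnAC mulnK ?prime_gt0.
apply: dvdn_trans (fib_dvd_wheel_prod (prime_wheel pr) pn _).
- by apply: fib_dvd; rewrite En dvdn_mull.
- by rewrite ltnS dvdn_leq //; lia.
Qed.

Lemma gcd_lcm_fib_dvd n m : 0 < n -> m < n ->
  gcdn (lcm_fib m) (fib n) %| wheel_prod n n.+1.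
Proof.
move=> Hn; elim: m => [|m IH] Hm; first by rewrite gcd1n dvd1n.
rewrite lcm_fib_S.
apply: dvdn_trans (gcd_lcm_dvd (lcm_fib_gt0 _) (fib_gt0 _) (fib_gt0 Hn)) _ => //.
rewrite dvdn_lcm IH ?gcd_fib_dvd_wheel_prod //; lia.
Qed.

Lemma lcm_fib_step_ge n : lcm_fib n * fib n.+1 <= lcm_fib n.+1 * wheel_prod n.+1 n.+2.
Proof.
rewrite -lcm_fib_gcd leq_mul2l dvdn_leq ?orbT ?wheel_prod_gt0 //.
exact: gcd_lcm_fib_dvd.
Qed.

Open Scope R_scope.

Lemma INR_leq a b : (a <= b)%N -> INR a <= INR b.
Proof. by move/leP; apply: le_INR. Qed.

Lemma INR_muln a b : INR (a * b)%N = INR a * INR b.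
Proof. exact: mult_INR. Qed.

Lemma sqrt5_bounds : 2 < sqrt 5 < 3.
Proof.
split.
- by rewrite -(sqrt_square 2); [apply: sqrt_lt_1|]; lra.
- by rewrite -(sqrt_square 3); [apply: sqrt_lt_1|]; lra.
Qed.

Lemma phi_gt1 : 1 < phi.
Proof. rewrite /phi; have := sqrt5_bounds; lra. Qed.

Lemma phi_lt2 : phi < 2.
Proof. rewrite /phi; have := sqrt5_bounds; lra. Qed.

Lemma phi_pow_SS k : phi ^ k.+2 = phi ^ k.+1 + phi ^ k.
Proof.
have sq : phi * phi = phi + 1 by rewrite /phi; have := sqrt_sqrt 5; nra.
by rewrite /= -Rmult_assoc sq; ring.
Qed.

Lemma phi_pow_pos k : 0 < phi ^ k.
Proof. apply: pow_lt; have := phi_gt1; lra. Qed.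

(* F_(k+1) <= phi^k: phi^k satisfies the Fibonacci recursion. *)
Lemma fib_le_phi_pow k : INR (fib k.+1) <= phi ^ k.
Proof.
suff [] : INR (fib k.+1) <= phi ^ k /\ INR (fib k.+2) <= phi ^ k.+1 by [].
elim: k => [|k [IH1 IH2]]; first by have := phi_gt1; rewrite /=; lra.
by split=> //; rewrite fibSS plus_INR phi_pow_SS; lra.
Qed.

(* phi^k <= F_(k+2), for the same reason. *)
Lemma phi_pow_le_fib k : phi ^ k <= INR (fib k.+2).
Proof.
suff [] : phi ^ k <= INR (fib k.+2) /\ phi ^ k.+1 <= INR (fib k.+3) by [].
elim: k => [|k [IH1 IH2]]; first by have := phi_lt2; rewrite /=; lra.
by split=> //; rewrite (fibSS k.+2) plus_INR phi_pow_SS; lra.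
Qed.

Lemma phi_pow_le_phi_fib d : phi ^ d <= phi * INR (fib d.+1).
Proof.
case: d => [|d]; first by have := phi_gt1; rewrite /=; lra.
by have := phi_pow_le_fib d; have := phi_gt1; rewrite /=; nra.
Qed.

(** * The upper bound *)

(* The three kinds of steps of the upper bound, in the exponent of phi:
   a plain step adds n, a divisor d of n+1 saves d-1, and n+1 = 6m saves 4m-3. *)
Lemma upper_step_plain n s e :
  INR (lcm_fib n) <= phi ^ s -> (s + n = e)%N -> INR (lcm_fib n.+1) <= phi ^ e.
Proof.
move=> H <-.
have A : INR (lcm_fib n.+1) <= INR (lcm_fib n) * INR (fib n.+1)
  by rewrite -mult_INR; apply/INR_leq/lcm_fib_step_le.
have B := fib_le_phi_pow n.
have := Rmult_le_compat _ _ _ _ (pos_INR _) (pos_INR _) H B.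
rewrite pow_add; lra.
Qed.

Lemma upper_step_divisor n s d e : INR (lcm_fib n) <= phi ^ s ->
  (0 < d)%N -> (d <= n)%N -> (d %| n.+1)%N -> (s + 1 + n = d.-1 + e)%N ->
  INR (lcm_fib n.+1) <= phi ^ e.
Proof.
move=> H d0 dn dd E.
have A : INR (lcm_fib n.+1) * INR (fib d) <= INR (lcm_fib n) * INR (fib n.+1)
  by rewrite -!mult_INR; apply/INR_leq/lcm_fib_step_divisor.
have B := fib_le_phi_pow n.
have C := phi_pow_le_phi_fib d.-1; rewrite prednK // in C.
have Q : INR (lcm_fib n) * INR (fib n.+1) <= phi ^ s * phi ^ n
  by apply: Rmult_le_compat => //; apply: pos_INR.
have P := pos_INR (lcm_fib n.+1); have Pd := phi_pow_pos d.-1.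
have := f_equal (pow phi) E; rewrite !pow_add pow_1 => E'.
have := phi_gt1; nra.
Qed.

Lemma upper_step_six n s m e : INR (lcm_fib n) <= phi ^ s ->
  (0 < m)%N -> (n.+1 = 6 * m)%N -> (s + n + m.-1 = (3 * m - 2) + (2 * m - 2) + e)%N ->
  INR (lcm_fib n.+1) <= phi ^ e.
Proof.
move=> H m0 Hn E.
have A : INR (lcm_fib n.+1) * (INR (fib (3 * m)) * INR (fib (2 * m)))
         <= INR (lcm_fib n) * INR (fib n.+1) * INR (fib m)
  by rewrite -!mult_INR; apply/INR_leq/lcm_fib_step_six.
have B := fib_le_phi_pow n.
have C := fib_le_phi_pow m.-1; rewrite prednK // in C.
have D3 := phi_pow_le_fib (3 * m - 2); rewrite (_ : (3 * m - 2).+2 = 3 * m)%N in D3; last lia.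
have D2 := phi_pow_le_fib (2 * m - 2); rewrite (_ : (2 * m - 2).+2 = 2 * m)%N in D2; last lia.
have Q1 : phi ^ (3 * m - 2) * phi ^ (2 * m - 2) <= INR (fib (3 * m)) * INR (fib (2 * m))
  by apply: Rmult_le_compat => //; apply: Rlt_le; apply: phi_pow_pos.
have Q2 : INR (lcm_fib n) * INR (fib n.+1) * INR (fib m) <= phi ^ s * phi ^ n * phi ^ m.-1.
  apply: Rmult_le_compat C; [rewrite -mult_INR | |]; try exact: pos_INR.
  exact: Rmult_le_compat (pos_INR _) (pos_INR _) H B.
have := f_equal (pow phi) E; rewrite !pow_add => E'.
have := Rmult_le_compat_l _ _ _ (pos_INR (lcm_fib n.+1)) Q1 => Q3.
apply: (Rmult_le_reg_l (phi ^ (3 * m - 2) * phi ^ (2 * m - 2))).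
  by apply: Rmult_lt_0_compat; apply: phi_pow_pos.
lra.
Qed.

Definition upper_exp_table (j r : nat) : nat :=
  match r with
  | 0 => 12*j*j + 4*j
  | 1 => 12*j*j + 10*j
  | 2 => 12*j*j + 13*j + 2
  | 3 => 12*j*j + 17*j + 5
  | 4 => 12*j*j + 20*j + 8
  | _ => 12*j*j + 26*j + 12
  end%N.

Definition upper_exp (n : nat) : nat := upper_exp_table (n %/ 6) (n %% 6).

(* One step of the upper bound, by the residue of n modulo 6: from n = 6j + r to n + 1
   we use the divisor 3j+1, 2j+1, 3j+2 of n+1 for r = 1, 2, 3, the factorisation
   n+1 = 6(j+1) for r = 5, and a plain step otherwise. *)
Lemma upper_exp_step n :
  INR (lcm_fib n) <= phi ^ upper_exp n -> INR (lcm_fib n.+1) <= phi ^ upper_exp n.+1.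
Proof.
rewrite /upper_exp; have En := divn_eq n 6; have Hr : (n %% 6 < 6)%N by rewrite ltn_mod.
move: (n %/ 6) (n %% 6) En Hr => j r En Hr H.
have Ej : (n.+1 %/ 6 = if r == 5 then j.+1 else j)%N by case: eqP; lia.
have Er : (n.+1 %% 6 = if r == 5 then 0 else r.+1)%N by case: eqP; lia.
rewrite Ej Er {Ej Er}.
case: r En Hr H => [|[|[|[|[|[|[|r]]]]]]] En Hr H //.
- by apply: (upper_step_plain H); rewrite /=; nia.
- apply: (upper_step_divisor (d := 3 * j + 1) H); rewrite /=; try nia.
  by apply/dvdnP; exists 2%N; lia.
- apply: (upper_step_divisor (d := 2 * j + 1) H); rewrite /=; try nia.
  by apply/dvdnP; exists 3%N; lia.
- apply: (upper_step_divisor (d := 3 * j + 2) H); rewrite /=; try nia.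
  by apply/dvdnP; exists 2%N; lia.
- by apply: (upper_step_plain H); rewrite /=; nia.
- by apply: (upper_step_six (m := j.+1) H); rewrite /=; nia.
Qed.

Lemma lcm_fib_le_upper_exp n : INR (lcm_fib n) <= phi ^ upper_exp n.
Proof. by elim: n => [|n IH]; [rewrite /=; lra | apply: upper_exp_step]. Qed.

Lemma upper_exp_le n : (3 * upper_exp n <= n * n + 4 * n)%N.
Proof.
rewrite /upper_exp; have En := divn_eq n 6; have Hr : (n %% 6 < 6)%N by rewrite ltn_mod.
move: (n %/ 6) (n %% 6) En Hr => j r En Hr.
by case: r En Hr => [|[|[|[|[|[|r]]]]]] En Hr; rewrite /upper_exp_table; nia.
Qed.

Lemma lcm_fib_upper n :
  INR (lcm_fib n) <= Rpower phi ((INR n) ^ 2 / 3 + 4 * INR n / 3).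
Proof.
have p1 := phi_gt1.
apply: Rle_trans (lcm_fib_le_upper_exp n) _.
rewrite -Rpower_pow; last lra.
apply: Rle_Rpower; first lra.
have := INR_leq (upper_exp_le n); rewrite [INR (3 * _)]INR_muln plus_INR !INR_muln /=; lra.
Qed.

(** * The lower bound: the logarithmic recursion *)

Fixpoint sumR (f : nat -> R) (D : nat) : R :=
  if D is D'.+1 then sumR f D' + f D' else 0.

Lemma sumR_S f D : sumR f D.+1 = sumR f D + f D.
Proof. by []. Qed.

Lemma sumR_ext f g D : (forall d, (d < D)%N -> f d = g d) -> sumR f D = sumR g D.
Proof.
elim: D => [//|D IH] H /=; rewrite IH ?H // => d Hd; apply: H; lia.
Qed.

Lemma sumR_le f g D : (forall d, (d < D)%N -> f d <= g d) -> sumR f D <= sumR g D.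
Proof.
elim: D => [|D IH] H /=; first lra.
have := IH (fun d Hd => H d (ltn_trans Hd (ltnSn D))); have := H D (ltnSn D); lra.
Qed.

Lemma sumR_add f g D : sumR (fun d => f d + g d) D = sumR f D + sumR g D.
Proof. by elim: D => [|D IH] /=; [lra | rewrite IH; lra]. Qed.

Lemma sumR_scal c f D : sumR (fun d => c * f d) D = c * sumR f D.
Proof. by elim: D => [|D IH] /=; [lra | rewrite IH; lra]. Qed.

Lemma sumR_mono f D D' : (forall d, 0 <= f d) -> (D <= D')%N -> sumR f D <= sumR f D'.
Proof.
move=> H; elim: D' => [|D' IH] HD; first by rewrite (_ : D = 0%N) /=; [lra | lia].
case: (ltngtP D D'.+1) => HD'; [| lia | by rewrite HD'; lra].
by have := IH HD'; have := H D'; rewrite /=; lra.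
Qed.

(* An upper bound for log_phi P(n, D): one term n/d - 1 per wheel divisor d < D of n,
   since F_(n/d) <= phi^(n/d - 1). *)
Definition wheel_log (n D : nat) : R :=
  sumR (fun d => if wheel d && (d %| n) then INR (n %/ d) - 1 else 0) D.

Lemma wheel_prod_le n D : (0 < n)%N -> INR (wheel_prod n D) <= Rpower phi (wheel_log n D).
Proof.
move=> Hn; have p1 := phi_gt1.
elim: D => [|D IH]; first by rewrite /= Rpower_O; lra.
rewrite /wheel_log /= Rpower_plus INR_muln -/(wheel_log n D).
apply: Rmult_le_compat => //; try exact: pos_INR.
case: ifP => [/andP [/wheel_gt1 D1 Dn] | _]; last by rewrite Rpower_O /=; lra.
have Hq : (0 < n %/ D)%N by rewrite divn_gt0 ?(dvdn_leq Hn Dn) // ltnW.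
rewrite -{2}(prednK Hq) S_INR (_ : _ + 1 - 1 = INR (n %/ D).-1); last ring.
rewrite Rpower_pow; last lra.
by have := fib_le_phi_pow (n %/ D).-1; rewrite prednK.
Qed.

Lemma Rpower_le_fib k : (0 < k)%N -> Rpower phi (INR k - 2) <= INR (fib k).
Proof.
have p1 := phi_gt1.
case: k => [//|[|j]] _.
- rewrite (_ : INR 1 - 2 = -1); last by rewrite /=; ring.
  apply: Rle_trans (Rle_Rpower phi (-1) 0 _ _) _; try lra.
  by rewrite Rpower_O /=; lra.
- rewrite (_ : INR j.+2 - 2 = INR j); last by rewrite !S_INR; ring.
  by rewrite Rpower_pow; [apply: phi_pow_le_fib | lra].
Qed.

Definition defect (k : nat) : R := wheel_log k k.+1.

Fixpoint lower_exp (n : nat) : R :=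
  if n is m.+1 then lower_exp m + (INR m.+1 - 2) - defect m.+1 else 0.

Lemma lcm_fib_ge_lower_exp n : Rpower phi (lower_exp n) <= INR (lcm_fib n).
Proof.
have p1 := phi_gt1.
elim: n => [|n IH]; first by rewrite /= Rpower_O; lra.
have A : INR (lcm_fib n) * INR (fib n.+1) <= INR (lcm_fib n.+1) * INR (wheel_prod n.+1 n.+2)
  by rewrite -!INR_muln; apply/INR_leq/lcm_fib_step_ge.
have B : INR (wheel_prod n.+1 n.+2) <= Rpower phi (defect n.+1) by apply: wheel_prod_le.
have C : Rpower phi (lower_exp n) * Rpower phi (INR n.+1 - 2) <= INR (lcm_fib n) * INR (fib n.+1).
  by apply: Rmult_le_compat; [left; apply: exp_pos | left; apply: exp_pos | | apply: Rpower_le_fib].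
have E : Rpower phi (lower_exp n.+1) * Rpower phi (defect n.+1) =
         Rpower phi (lower_exp n) * Rpower phi (INR n.+1 - 2).
  by rewrite -!Rpower_plus /=; congr (Rpower _ _); ring.
have M := Rmult_le_compat_l _ _ _ (pos_INR (lcm_fib n.+1)) B.
apply: (Rmult_le_reg_r (Rpower phi (defect n.+1))); [exact: exp_pos | lra].
Qed.

Definition choose2 (M : nat) : R := INR M * (INR M - 1) / 2.

(* Summing the defects over k <= n gives, for each wheel element d, the sum of
   (k/d - 1) over the multiples k of d up to n, which is C(floor(n/d), 2). *)
Definition defect_total (n : nat) : R :=
  sumR (fun d => if wheel d then choose2 (n %/ d) else 0) n.+1.

Lemma choose2_div_succ n d : (0 < d)%N ->
  choose2 (n.+1 %/ d) = choose2 (n %/ d) + (if d %| n.+1 then INR (n.+1 %/ d) - 1 else 0).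
Proof.
move=> d0; rewrite divnS //; case: (d %| n.+1).
- by rewrite add1n /choose2 S_INR; field.
- by rewrite add0n Rplus_0_r.
Qed.

Lemma defect_total_succ n : defect_total n.+1 = defect_total n + defect n.+1.
Proof.
rewrite /defect_total /defect /wheel_log (sumR_S _ n.+1).
rewrite (sumR_S (fun d => if wheel d && _ then _ else _) n.+1).
rewrite (sumR_ext (g := fun d => (if wheel d then choose2 (n %/ d) else 0) +
   (if wheel d && (d %| n.+1) then INR (n.+1 %/ d) - 1 else 0))); last first.
  move=> d _; case W: (wheel d) => /=; last lra.
  by rewrite choose2_div_succ // ltnW ?wheel_gt1.
rewrite sumR_add divnn dvdnn andbT.
by case: (wheel n.+1); rewrite /choose2 /=; lra.
Qed.

Lemma lower_exp_eq n : lower_exp n = INR n * (INR n + 1) / 2 - 2 * INR n - defect_total n.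
Proof.
elim: n => [|n IH]; first by rewrite /defect_total /= /choose2 /=; field.
have -> : lower_exp n.+1 = lower_exp n + (INR n.+1 - 2) - defect n.+1 by [].
by rewrite IH defect_total_succ S_INR; field.
Qed.

(** * The density of the wheel *)

Definition wheel_weight (d : nat) : R := if wheel d then 1 / (INR d * INR d) else 0.

(* An upper bound for the sum of 1/d^2 over the wheel: the elements up to 7,
   and 1/27 for the tail (see wheel_weight_block). *)
Definition wheel_mass : R := 1/4 + 1/9 + 1/25 + 1/49 + 1/27.

Lemma wheel_weight_ge0 d : 0 <= wheel_weight d.
Proof.
rewrite /wheel_weight; case: ifP => [/wheel_gt1 d1|_]; last lra.
have : 0 < INR d by apply: lt_0_INR; apply/ltP; lia.
by move=> h; apply: Rlt_le; apply: Rdiv_lt_0_compat; nra.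
Qed.

(* The wheel elements 6i+11, 6i+13 weigh at most the telescoping term
   2/((x-3)(x+3)) = (1/3)(1/(x-3) - 1/(x+3)) with x = 6i+12. *)
Lemma inv_sq_pair_le x : 12 <= x ->
  1 / ((x - 1) * (x - 1)) + 1 / ((x + 1) * (x + 1)) <= 2 / ((x - 3) * (x + 3)).
Proof.
move=> Hx.
have E : 2 / ((x - 3) * (x + 3)) - (1 / ((x - 1) * (x - 1)) + 1 / ((x + 1) * (x + 1)))
  = 2 * (6 * x * x + 10) / ((x - 3) * (x + 3) * ((x - 1) * (x - 1)) * ((x + 1) * (x + 1))).
  by field; repeat split; lra.
have : 0 < 2 * (6 * x * x + 10) / ((x - 3) * (x + 3) * ((x - 1) * (x - 1)) * ((x + 1) * (x + 1))).
  by apply: Rdiv_lt_0_compat; [nra | repeat apply: Rmult_lt_0_compat; lra].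
lra.
Qed.

Lemma wheel_weight_block i : sumR wheel_weight (6 * i + 11) <= wheel_mass - (1/3) / (6 * INR i + 9).
Proof.
elim: i => [|i IH]; first by rewrite /wheel_mass /wheel_weight /=; lra.
have -> : sumR wheel_weight (6 * i.+1 + 11) = sumR wheel_weight (6 * i + 11)
   + wheel_weight (6 * i + 11) + wheel_weight (6 * i + 12) + wheel_weight (6 * i + 13)
   + wheel_weight (6 * i + 14) + wheel_weight (6 * i + 15) + wheel_weight (6 * i + 16).
  rewrite (_ : 6 * i.+1 + 11 = (6 * i + 11).+1.+1.+1.+1.+1.+1)%N /=; last lia.
  by do 5 f_equal; f_equal; lia.
have wout d : ~~ wheel d -> wheel_weight d = 0 by rewrite /wheel_weight => /negbTE ->.
have win d : wheel d -> wheel_weight d = 1 / (INR d * INR d) by rewrite /wheel_weight => ->.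
have [-> [-> [-> ->]]] : (wheel_weight (6 * i + 12) = 0) /\ (wheel_weight (6 * i + 14) = 0) /\
    (wheel_weight (6 * i + 15) = 0) /\ (wheel_weight (6 * i + 16) = 0).
  by do !split; apply: wout; rewrite /wheel; lia.
have [-> ->] : (wheel_weight (6 * i + 11) = 1 / (INR (6 * i + 11) * INR (6 * i + 11))) /\
    (wheel_weight (6 * i + 13) = 1 / (INR (6 * i + 13) * INR (6 * i + 13))).
  by split; apply: win; rewrite /wheel; lia.
have Hi := pos_INR i.
rewrite (_ : INR (6 * i + 11) = (6 * INR i + 12) - 1); last by rewrite plus_INR INR_muln /=; ring.
rewrite (_ : INR (6 * i + 13) = (6 * INR i + 12) + 1); last by rewrite plus_INR INR_muln /=; ring.
have P := inv_sq_pair_le (x := 6 * INR i + 12) ltac:(lra).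
have E : 2 / ((6 * INR i + 12 - 3) * (6 * INR i + 12 + 3)) =
         1 / 3 / (6 * INR i + 9) - 1 / 3 / (6 * INR i.+1 + 9).
  by rewrite S_INR; field; lra.
lra.
Qed.

Lemma wheel_weight_sum_le N : sumR wheel_weight N <= wheel_mass.
Proof.
apply: Rle_trans (sumR_mono wheel_weight_ge0 (_ : (N <= 6 * N + 11)%N)) _; first lia.
apply: Rle_trans (wheel_weight_block N) _.
have : 0 < 1 / 3 / (6 * INR N + 9) by apply: Rdiv_lt_0_compat; have := pos_INR N; lra.
lra.
Qed.

(* For d = 2, 3 we keep the linear term -(n/d)/2 of the bound on C(floor(n/d), 2);
   for the other wheel elements it is dropped. *)
Definition small_weight (d : nat) : R := if (d == 2)%N || (d == 3)%N then 1 / INR d else 0.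

Lemma sumR_small_weight D : (4 <= D)%N -> sumR small_weight D = 1/2 + 1/3.
Proof.
elim: D => [//|D IH] HD.
case: (D =P 3%N) => [-> | H]; first by rewrite /small_weight /=; field.
rewrite sumR_S IH; last lia.
by rewrite /small_weight (_ : (D == 2)%N || (D == 3)%N = false) /=; [lra | lia].
Qed.

Lemma choose2_div_le n d : (0 < d)%N -> (d <= n)%N ->
  choose2 (n %/ d) <= INR n * INR n / 2 * (1 / (INR d * INR d)) - INR n / 2 * (1 / INR d).
Proof.
move=> d0 dn.
have dp : 0 < INR d by apply: lt_0_INR; apply/ltP.
have dle : INR d <= INR n by apply: INR_leq.
have Mle : INR (n %/ d) * INR d <= INR n by rewrite -INR_muln; apply/INR_leq/leq_divM.
set M := INR (n %/ d); set x := INR n / INR d.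
have nx : INR n = x * INR d by rewrite /x; field; apply: Rgt_not_eq.
have Mx : M <= x by apply: (Rmult_le_reg_r (INR d)); rewrite // -nx.
have x1 : 1 <= x by apply: (Rmult_le_reg_r (INR d)); rewrite // -nx; lra.
have M0 : 0 <= M by apply: pos_INR.
have -> : INR n * INR n / 2 * (1 / (INR d * INR d)) - INR n / 2 * (1 / INR d) = (x * x - x) / 2.
  by rewrite nx; field; apply: Rgt_not_eq.
rewrite /choose2 -/M; nra.
Qed.

Lemma defect_total_term_le n d : (d <= n)%N ->
  (if wheel d then choose2 (n %/ d) else 0) <=
  INR n * INR n / 2 * wheel_weight d - INR n / 2 * small_weight d.
Proof.
move=> dn; rewrite /wheel_weight /small_weight.
case W: (wheel d); last first.
  rewrite (_ : (d == 2)%N || (d == 3)%N = false); first lra.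
  by apply/negbTE; apply: contraFN W => /orP [] /eqP ->.
have d0 : (0 < d)%N by have := wheel_gt1 W; lia.
have B := choose2_div_le d0 dn.
case: ifP => _; first lra.
have : 0 <= INR n / 2 * (1 / INR d).
  have := pos_INR n; have : 0 < 1 / INR d by apply: Rdiv_lt_0_compat; [lra | apply: lt_0_INR; apply/ltP].
  nra.
lra.
Qed.

Lemma defect_total_le n : (3 <= n)%N ->
  defect_total n <= INR n * INR n / 2 * wheel_mass - INR n / 2 * (5/6).
Proof.
move=> Hn.
apply: Rle_trans (sumR_le (fun d Hd => defect_total_term_le (d := d) (n := n) _)) _; first lia.
rewrite (sumR_ext (g := fun d => INR n * INR n / 2 * wheel_weight d + (- (INR n / 2)) * small_weight d));
  last by move=> d _; ring.
rewrite sumR_add !sumR_scal sumR_small_weight; last lia.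
have := wheel_weight_sum_le n.+1.
have : 0 <= INR n * INR n / 2 by have := pos_INR n; nra.
nra.
Qed.

Lemma lower_exp_ge n : (51 <= n)%N -> (INR n ^ 2 - 9) / 4 <= lower_exp n.
Proof.
move=> Hn; rewrite lower_exp_eq.
have := defect_total_le (n := n) ltac:(lia).
have : 51 <= INR n by rewrite (_ : 51 = INR 51); [apply: INR_leq | rewrite /=; ring].
rewrite /wheel_mass /=; nra.
Qed.

(** * Small n by computation *)

(* For 3 <= n <= 50 the estimate of lower_exp_ge is too weak; there we check
   F_(n^2-7) <= L_n^4 by evaluation in binary arithmetic. *)

Lemma Ndivide_divide a b : N.divide (N.of_nat a) (N.of_nat b) <-> Nat.divide a b.
Proof.
split=> [[z Hz]|[z ->]]; last by exists (N.of_nat z); rewrite Nat2N.inj_mul.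
by exists (N.to_nat z); apply: Nat2N.inj; rewrite Nat2N.inj_mul N2Nat.id.
Qed.

Lemma Nat2N_gcd a b : N.of_nat (Nat.gcd a b) = N.gcd (N.of_nat a) (N.of_nat b).
Proof.
symmetry; apply: N.gcd_unique; try apply/Ndivide_divide.
- exact: Nat.gcd_divide_l.
- exact: Nat.gcd_divide_r.
- move=> q; rewrite -(N2Nat.id q) => /Ndivide_divide Hq1 /Ndivide_divide Hq2.
  by apply/Ndivide_divide/Nat.gcd_greatest.
Qed.

Lemma Nat2N_lcm a b : N.of_nat (Nat.lcm a b) = N.lcm (N.of_nat a) (N.of_nat b).
Proof. by rewrite /Nat.lcm /N.lcm Nat2N.inj_mul Nat2N.inj_div Nat2N_gcd. Qed.

(* The pair (F_k, F_(k+1)) in binary, computed in linear time. *)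
Fixpoint fib_pairN (k : nat) : N * N :=
  if k is k'.+1 then let (a, b) := fib_pairN k' in (b, N.add a b) else (N0, 1%num).

Lemma fib_pairN_spec k : fib_pairN k = (N.of_nat (fib k), N.of_nat (fib k.+1)).
Proof.
elim: k => [//|k IH].
by rewrite [fib_pairN _]/= IH fibSS Nat2N.inj_add N.add_comm.
Qed.

Fixpoint lcm_fibN (n : nat) : N :=
  if n is m.+1 then N.lcm (lcm_fibN m) (fst (fib_pairN m.+1)) else 1%num.

Lemma lcm_fibN_spec n : lcm_fibN n = N.of_nat (lcm_fib n).
Proof.
elim: n => [//|n IH].
by rewrite [lcm_fibN _]/= IH fib_pairN_spec /= -Nat2N_lcm.
Qed.

Definition small_lower_test (n : nat) : bool :=
  N.leb (fst (fib_pairN (n * n - 7))) (let l := lcm_fibN n in l * l * l * l)%num.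

Lemma small_lower_tests : all small_lower_test (iota 3 48).
Proof. by vm_compute. Qed.

Lemma fib_le_lcm_fib_pow4 n : (3 <= n <= 50)%N ->
  (fib (n * n - 7) <= lcm_fib n * lcm_fib n * lcm_fib n * lcm_fib n)%N.
Proof.
move=> Hn.
have := allP small_lower_tests n; rewrite mem_iota /small_lower_test.
rewrite fib_pairN_spec lcm_fibN_spec /= -!Nat2N.inj_mul => /(_ ltac:(lia)) /N.leb_le.
lia.
Qed.

Lemma pow_le_reg a b k : 0 <= a -> 0 <= b -> a ^ k.+1 <= b ^ k.+1 -> a <= b.
Proof.
move=> a0 b0 H; apply: Rnot_lt_le => ba.
have bk : b ^ k <= a ^ k by apply: pow_incr; lra.
have ak : 0 < a ^ k by apply: pow_lt; lra.
by move: H; rewrite /=; nra.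
Qed.

Lemma lcm_fib_ge1 n : 1 <= INR (lcm_fib n).
Proof. by rewrite (_ : 1 = INR 1) //; apply/INR_leq/lcm_fib_gt0. Qed.

Lemma lcm_fib_lower_large n : (51 <= n)%N ->
  Rpower phi ((INR n ^ 2 - 9) / 4) <= INR (lcm_fib n).
Proof.
move=> Hn; apply: Rle_trans (lcm_fib_ge_lower_exp n).
by apply: Rle_Rpower; [have := phi_gt1; lra | apply: lower_exp_ge].
Qed.

Lemma lcm_fib_lower_small n : (3 <= n <= 50)%N ->
  Rpower phi ((INR n ^ 2 - 9) / 4) <= INR (lcm_fib n).
Proof.
move=> Hn; have p1 := phi_gt1.
have L4 : INR (fib (n * n - 7)) <= INR (lcm_fib n) ^ 4.
  by have := INR_leq (fib_le_lcm_fib_pow4 Hn); rewrite !INR_muln /=; lra.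
have F := phi_pow_le_fib (n * n - 9); rewrite (_ : (n * n - 9).+2 = n * n - 7)%N in F; last lia.
apply: (@pow_le_reg _ _ 3); [left; exact: exp_pos | have := lcm_fib_ge1 n; lra |].
rewrite -Rpower_pow ?Rpower_mult; last exact: exp_pos.
rewrite (_ : _ * INR 4 = INR (n * n - 9)); first by rewrite Rpower_pow; lra.
rewrite minus_INR ?INR_muln /=; [field | lia].
Qed.

Lemma lcm_fib_lower n : (1 <= n)%N ->
  Rpower phi (INR n ^ 2 / 4 - 9 / 4) <= INR (lcm_fib n).
Proof.
move=> Hn; have p1 := phi_gt1.
rewrite (_ : _ - _ = (INR n ^ 2 - 9) / 4); last field.
case: (leqP 51 n) => [H51 | /ltnSE H50]; first exact: lcm_fib_lower_large.
case: (leqP 3 n) => [H3 | /ltnSE H2]; first by apply: lcm_fib_lower_small; lia.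
apply: Rle_trans (Rle_Rpower phi _ 0 _ _) _; first lra.
- by have := INR_leq H2; have := pos_INR n; rewrite /=; nra.
- by rewrite Rpower_O; [apply: lcm_fib_ge1 | lra].
Qed.

Theorem mainTheorem7 (n : nat) (hn : Peano.le 1 n) :
  Rpower phi ((INR n) ^ 2 / 4 - 9 / 4) <= INR (lcm_fib n) /\
  INR (lcm_fib n) <= Rpower phi ((INR n) ^ 2 / 3 + 4 * INR n / 3).
Proof.
split; [apply: lcm_fib_lower; apply/leP; exact: hn | exact: lcm_fib_upper].
Qed.
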